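(* Let $d\ge1$, let $\mathbf{e}_0=\mathbf{0}\in\mathbb{R}^d$ and $\mathbf{e}_1,\ldots,\mathbf{e}_d$ the standard unit basis vectors, let $\lambda\in[\frac{d}{d+1},1)$ and consider $S_i(\mathbf{x})=\lambda\mathbf{x}+(1-\lambda)\mathbf{e}_i$, $i=0,\ldots,d$, with attractor $X$. If $\mathbf{x}\in\mathrm{int}(X)$, then there exists a finite word $\mathbf{a}\in\mathcal{D}^*$ such that $T_{\mathbf{a}}(\mathbf{x})\in(0,1-\lambda]^d$.
   Context: $\mathcal{D}=\{0,\ldots,d\}$, $\mathcal{D}^*$ is the set of finite words over $\mathcal{D}$ (including the empty word). $X$ is the unique non-empty compact set with $X=\bigcup_{i=0}^dS_i(X)$. For $i\in\mathcal{D}$, $T_i(\mathbf{x})=\frac{\mathbf{x}-(1-\lambda)\mathbf{e}_i}{\lambda}$ is the inverse of $S_i$, and for $\mathbf{a}=a_1\cdots a_j\in\mathcal{D}^*$, $T_{\mathbf{a}}=T_{a_j}\circ\cdots\circ T_{a_1}$ (the identity for the empty word). *)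

From HB Require Import structures.
From mathcomp Require Import all_boot all_order all_algebra.
From mathcomp Require Import all_classical all_reals all_analysis.
Set Implicit Arguments. Unset Strict Implicit. Unset Printing Implicit Defensive.
Import Order.TTheory GRing.Theory Num.Theory.
Import numFieldNormedType.Exports.
Local Open Scope ring_scope.
Local Open Scope classical_set_scope.

(* e_0 = 0, e_i = i-th standard unit vector (i = 1..d), indexed by 'I_d.+1 *)
Definition evec (R : realType) (d : nat) (i : 'I_d.+1) : 'rV[R]_d :=
  \row_(j < d) (if (j.+1 == i :> nat) then 1 else 0).

Definition Smap (R : realType) (d : nat) (lam : R) (i : 'I_d.+1) (x : 'rV[R]_d)
  : 'rV[R]_d := lam *: x + (1 - lam) *: evec R i.

Definition Tmap (R : realType) (d : nat) (lam : R) (i : 'I_d.+1) (x : 'rV[R]_d)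
  : 'rV[R]_d := lam^-1 *: (x - (1 - lam) *: evec R i).

(* T_a = T_{a_j} o ... o T_{a_1} for a = a_1 ... a_j (identity for the empty word) *)
Definition Tword (R : realType) (d : nat) (lam : R) (a : seq 'I_d.+1) (x : 'rV[R]_d)
  : 'rV[R]_d := foldl (fun y i => Tmap lam i y) x a.

Definition is_attractor (R : realType) (d : nat) (lam : R) (X : set 'rV[R]_d) : Prop :=
  X !=set0 /\ compact X /\ X = \bigcup_(i in [set: 'I_d.+1]) (Smap lam i @` X).

From HB Require Import structures.
From mathcomp Require Import all_boot all_order all_algebra.
From mathcomp Require Import all_classical all_reals all_analysis.
From mathcomp Require Import lra ring.
Import Order.TTheory GRing.Theory Num.Theory.
Import numFieldNormedType.Exports.
Local Open Scope ring_scope.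
Local Open Scope classical_set_scope.

(* The attractor lies in the simplex conv{e_0, ..., e_d}: if a linear functional
   is at most m at every e_i, its supremum M over X satisfies
   M <= lam M + (1 - lam) m, hence M <= m.  So an interior point x has positive
   coordinates and coordinate sum s < 1.  While some coordinate x_j exceeds
   1 - lam, apply T_j (j >= 1): the coordinates stay positive and the deficit
   1 - s is multiplied by 1/lam.  As the deficit stays below 1, this stops after
   finitely many steps, with every coordinate in (0, 1 - lam].  The hypothesis
   lam >= d/(d+1) is only used to get lam > 0. *)

Section MatrixNorm.
Context {R : realDomainType} {m n : nat}.

Lemma mx_entry_le_norm (A : 'M[R]_(m, n)) i j : `|A i j| <= `|A|.
Proof. by rewrite [leRHS]mx_normrE (le_bigmax _ (fun ij => `|A ij.1 ij.2|) (i, j)). Qed.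

Lemma mx_norm_le (A : 'M[R]_(m, n)) c :
  0 <= c -> (forall i j, `|A i j| <= c) -> `|A| <= c.
Proof. by move=> c0 hA; rewrite [leLHS]mx_normrE; apply: bigmax_le => // ij _. Qed.

End MatrixNorm.

Lemma expr_le_of_lt1 (R : realType) (z t : R) :
  0 <= z -> z < 1 -> 0 < t -> exists n, z ^+ n <= t.
Proof.
move=> z0 z1 t0; have zn0 : `|z| < 1 by rewrite ger0_norm.
have /cvgrPdist_lt/(_ t t0) [N _ hN] := cvg_expr zn0.
exists N; have := hN N (leqnn N); rewrite /= sub0r normrN ger0_norm ?exprn_ge0 //.
exact: ltW.
Qed.

Definition std_simplex (R : realType) (d : nat) : set 'rV[R]_d :=
  [set y | (forall k, 0 <= y ord0 k) /\ \sum_k y ord0 k <= 1].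

Section SimplexVertices.
Context {R : realType} {d : nat}.

Lemma evec_lift (j : 'I_d) : evec R (lift ord0 j) = \row_k (k == j)%:R.
Proof.
apply/rowP => k; rewrite !mxE lift0 eqSS.
by rewrite (_ : (k == j :> nat) = (k == j)) //; case: (k == j).
Qed.

Lemma evec0_entry (k : 'I_d) : evec R ord0 ord0 k = 0.
Proof. by rewrite mxE. Qed.

Lemma sum_indicator (j : 'I_d) : \sum_k (k == j)%:R = 1 :> R.
Proof. by rewrite (bigD1 j) //= eqxx big1 ?addr0 // => k /negbTE ->. Qed.

Lemma sum_evec_lift (j : 'I_d) : \sum_k evec R (lift ord0 j) ord0 k = 1.
Proof. by rewrite -(sum_indicator j) evec_lift; apply: eq_bigr => k _; rewrite mxE. Qed.

Lemma norm_evec_le1 (i : 'I_d.+1) : `|evec R i| <= 1.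
Proof.
apply: mx_norm_le => // i0 k; rewrite (ord1 i0) mxE.
by case: ifP; rewrite ?normr1 ?normr0.
Qed.

Lemma evec_in_std_simplex (i : 'I_d.+1) : std_simplex R d (evec R i).
Proof.
have [j ->|->] := unliftP ord0 i.
  by split; [move=> k; rewrite evec_lift mxE ler0n | rewrite sum_evec_lift].
by split; [move=> k; rewrite evec0_entry | rewrite big1 // => k _; rewrite evec0_entry].
Qed.

End SimplexVertices.

Lemma self_similar_le (R : realType) (T I : Type) (S : I -> T -> T)
    (X : set T) (f : T -> R) (lam m : R) :
  0 <= lam -> lam < 1 -> X `<=` \bigcup_(i in [set: I]) (S i @` X) ->
  has_ubound (f @` X) ->
  (forall i y, X y -> f (S i y) <= lam * f y + (1 - lam) * m) ->
  forall y, X y -> f y <= m.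
Proof.
move=> lam0 lam1 Xcover fX_ub fS y Xy.
have fX_sup : has_sup (f @` X) by split; [exists (f y), y | ].
have le_sup := sup_upper_bound fX_sup.
suff sup_le : sup (f @` X) <= m by apply: le_trans sup_le; apply: le_sup; exists y.
have : sup (f @` X) <= lam * sup (f @` X) + (1 - lam) * m.
  apply: ge_sup; first by exists (f y), y.
  move=> _ [z /Xcover [i _ [w Xw <-]] <-]; apply: le_trans (fS i w Xw) _.
  by rewrite lerD2r ler_wpM2l // le_sup //; exists w.
by nra.
Qed.

Section Attractor.
Context {R : realType} {d : nat} {lam : R} {X : set 'rV[R]_d}.
Hypotheses (lam_ge0 : 0 <= lam) (lam_lt1 : lam < 1) (X_attr : is_attractor lam X).

Lemma attractor_bounded : exists M, forall y, X y -> `|y| <= M.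
Proof.
have [_ [/compact_bounded [M [_ XM]] _]] := X_attr.
by exists (M + 1) => y Xy; apply: XM Xy; rewrite ltrDl.
Qed.

Lemma attractor_sub_halfspace (c : 'rV[R]_d) (m : R) :
  (forall i, \sum_k c ord0 k * evec R i ord0 k <= m) ->
  forall y, X y -> \sum_k c ord0 k * y ord0 k <= m.
Proof.
move=> c_evec; have [_ [_ Xfix]] := X_attr.
apply: (@self_similar_le R _ _ (Smap lam) X _ lam) => //; first by rewrite {1}Xfix.
  have [M XM] := attractor_bounded.
  exists (\sum_k `|c ord0 k| * M) => _ [y Xy <-].
  apply: ler_sum => k _; rewrite (le_trans (ler_norm _)) // normrM ler_wpM2l //.
  exact: le_trans (mx_entry_le_norm _ _ _) (XM _ Xy).
move=> i y _; rewrite [leRHS]addrC -lerBlDr.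
have -> : \sum_k c ord0 k * Smap lam i y ord0 k - lam * \sum_k c ord0 k * y ord0 k
    = (1 - lam) * \sum_k c ord0 k * evec R i ord0 k.
  rewrite !mulr_sumr -sumrB; apply: eq_bigr => k _; rewrite !mxE; ring.
by apply: ler_wpM2l; [rewrite subr_ge0 ltW | exact: c_evec].
Qed.

Lemma attractor_sub_std_simplex : X `<=` std_simplex R d.
Proof.
have sum_ones (z : 'rV[R]_d) :
    \sum_k (const_mx 1 : 'rV[R]_d) ord0 k * z ord0 k = \sum_k z ord0 k.
  by apply: eq_bigr => k _; rewrite mxE mul1r.
have sum_coordN k (z : 'rV[R]_d) :
    \sum_j (- delta_mx 0 k : 'rV[R]_d) ord0 j * z ord0 j = - z ord0 k.
  rewrite (bigD1 k) //= big1 => [|j /negbTE jk]; last by rewrite !mxE jk /= oppr0 mul0r.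
  by rewrite !mxE !eqxx /= addr0 mulN1r.
move=> y Xy; split=> [k|].
  rewrite -oppr_le0 -sum_coordN; apply: attractor_sub_halfspace => // i.
  by rewrite sum_coordN oppr_le0; exact: (evec_in_std_simplex i).1.
rewrite -(sum_ones y); apply: attractor_sub_halfspace => // i.
by rewrite sum_ones; exact: (evec_in_std_simplex i).2.
Qed.

End Attractor.

Lemma interior_sub_std_simplex {R : realType} {d : nat} {A : set 'rV[R]_d} {x} :
  (0 < d)%N -> A `<=` std_simplex R d -> interior A x ->
  (forall k, 0 < x ord0 k) /\ \sum_k x ord0 k < 1.
Proof.
move=> d_gt0 A_sub /nbhs_ballP [e e_gt0 xeA].
have e2_gt0 : 0 < e / 2 by rewrite divr_gt0.
have near_x (v : 'rV[R]_d) : `|v| <= 1 -> std_simplex R d (x + (e / 2) *: v).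
  move=> v_le1; apply/A_sub/xeA; rewrite -ball_normE /= opprD addrA subrr add0r.
  by rewrite normrN normrZ gtr0_norm //; nra.
split=> [k|].
  have := near_x (- evec R (lift ord0 k)); rewrite normrN.
  move=> /(_ (norm_evec_le1 _)) [/(_ k) + _].
  by rewrite !mxE lift0 eqxx; lra.
set v := evec R (lift ord0 (Ordinal d_gt0)).
have [_] := near_x v (norm_evec_le1 _).
rewrite (eq_bigr (fun k => x ord0 k + e / 2 * v ord0 k)) => [|k _]; last by rewrite !mxE.
by rewrite big_split /= -mulr_sumr sum_evec_lift; lra.
Qed.

Section InverseMaps.
Context {R : realType} {d : nat}.
Variable lam : R.
Hypotheses (lam_gt0 : 0 < lam) (lam_lt1 : lam < 1).

Lemma Tmap_lift_entry (j : 'I_d) (y : 'rV[R]_d) k :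
  Tmap lam (lift ord0 j) y ord0 k = lam^-1 * (y ord0 k - (1 - lam) * (k == j)%:R).
Proof. by rewrite /Tmap evec_lift !mxE. Qed.

Lemma deficit_Tmap_lift (j : 'I_d) (y : 'rV[R]_d) :
  1 - \sum_k Tmap lam (lift ord0 j) y ord0 k = lam^-1 * (1 - \sum_k y ord0 k).
Proof.
under eq_bigr do rewrite Tmap_lift_entry.
rewrite -mulr_sumr sumrB -mulr_sumr sum_indicator.
by field; rewrite gt_eqF.
Qed.

Lemma Tword_into_cube (n : nat) (y : 'rV[R]_d) :
  (forall k, 0 < y ord0 k) -> \sum_k y ord0 k < 1 ->
  lam ^+ n <= 1 - \sum_k y ord0 k ->
  exists a : seq 'I_d.+1, forall j : 'I_d, 0 < Tword lam a y ord0 j <= 1 - lam.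
Proof.
elim: n y => [|n IHn] y y_gt0 sum_lt1 lam_n_le;
  (have [in_cube|/existsNP [j /negP yj_not_le]] := pselect (forall j, y ord0 j <= 1 - lam);
    first by exists [::] => j; rewrite /= y_gt0 in_cube);
  have yj_gt : 1 - lam < y ord0 j by rewrite ltNge.
  have yj_le : y ord0 j <= \sum_k y ord0 k.
    by rewrite (bigD1 j) //= lerDl sumr_ge0 // => k _; apply: ltW.
  by move: lam_lt1 lam_n_le; rewrite expr0; lra.
have lamV_gt0 : 0 < lam^-1 by rewrite invr_gt0.
have [|||a y'_in_cube] := IHn (Tmap lam (lift ord0 j) y).
- move=> k; rewrite Tmap_lift_entry mulr_gt0 //.
  by case: eqP => [->|_]; rewrite ?mulr1 ?mulr0 ?subr0 //; lra.
- by rewrite -subr_gt0 deficit_Tmap_lift mulr_gt0 // subr_gt0.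
- rewrite deficit_Tmap_lift -[lam ^+ n](mulKf (lt0r_neq0 lam_gt0)) -exprS.
  by rewrite ler_wpM2l // ltW.
by exists (lift ord0 j :: a).
Qed.

End InverseMaps.

Theorem lemma4p5 (R : realType) (d : nat) (lam : R) (X : set 'rV[R]_d)
  (hd : (1 <= d)%N)
  (hlam1 : d%:R / d.+1%:R <= lam) (hlam2 : lam < 1)
  (hX : is_attractor lam X)
  (x : 'rV[R]_d) (hx : interior X x) :
  exists a : seq 'I_d.+1,
    forall j : 'I_d, 0 < Tword lam a x ord0 j <= 1 - lam.
Proof.
have lam_gt0 : 0 < lam by apply: lt_le_trans hlam1; rewrite divr_gt0 ?ltr0n.
have X_sub := attractor_sub_std_simplex (ltW lam_gt0) hlam2 hX.
have [x_gt0 sum_lt1] := interior_sub_std_simplex hd X_sub hx.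
have [n lam_n_le] : exists n, lam ^+ n <= 1 - \sum_k x ord0 k.
  by apply: expr_le_of_lt1; rewrite ?subr_gt0 ?ltW.
exact: Tword_into_cube lam_gt0 hlam2 n x x_gt0 sum_lt1 lam_n_le.
Qed.
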